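(* Let $m,n\ge1$ and let $\mathcal G=\mathcal G(A,\tau)$ be the Kac–Moody superalgebra described below. Then in $\mathcal G$: (1) $[e_{ij},e_{kl}]=\delta_{j-1,k}e_{il}$ for all $i\ge j$, $k\ge l$ in $\Omega$ with $(i,j)\ge(k,l)$ lexicographically and $k<m+n$; (2) $[e_{m+n,i},[e_{m+n,j},e_{m+n,k}]]=0$ for all $i,j,k\in\Omega$; (3) $[[e_{m+n,i},e_{m+n,j}],[e_{m+n,k},e_{m+n,l}]]=0$ for all $i,j,k,l\in\Omega$.
   Context: Let $k$ be a field with $\mathrm{char}(k)\ne2,3$. $\Omega=\{1,\dots,m+n\}$, $\tau=\{n\}$, and $A=(a_{ij})$ with $a_{ii}=2$ for $i\ne n$, $a_{nn}=0$, $a_{n,n+1}=1$, $a_{m+n,m+n-1}=-2$, $a_{ij}=-1$ if $|i-j|=1$ and $(i,j)\notin\{(n,n+1),(m+n,m+n-1)\}$, $a_{ij}=0$ if $|i-j|>1$. The Kac–Moody superalgebra $\mathcal G(A,\tau)$ is the Lie superalgebra generated by $e_i,h_i,f_i$ ($i\in\Omega$), with $e_n,f_n$ odd and all other generators even, subject to: $[h_i,h_j]=0$; $[e_i,f_j]=\delta_{ij}h_i$; $[e_j,h_i]=-a_{ij}e_j$; $[h_i,f_j]=-a_{ij}f_j$; $(\mathrm{ad}e_i)^{1-n_{ij}}e_j=0$ and $e_i(\widetilde{\mathrm{ad}}e_j)^{1-n_{ji}}=0$ for $i>j$; $[[e_{k+1},e_k],[e_k,e_{k-1}]]=0$ for $k\in\eta$;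 and the same relations with $f$'s in place of $e$'s. Here $(\mathrm{ad}x)^ny=[x,[x,\dots,[x,y]\dots]]$, $x(\widetilde{\mathrm{ad}}y)^n=[\dots[[x,y],y],\dots,y]$ ($n$ times), $n_{ij}=a_{ij}$ if $a_{ii}=2$ or $a_{ij}=0$, $n_{ij}=-1$ if $a_{ii}=0\ne a_{ij}$, and $\eta$ is the set of $k$ with $k\in\tau$, $k\pm1\notin\tau$ (and $k\pm1\in\Omega$), $a_{kk}=0$, $a_{k+1,k-1}=0$, $a_{k,k+1}+a_{k,k-1}=0$. Notation: for $i>j$, $e_{ij}=[e_i,[e_{i-1},[\dots,[e_{j+1},e_j]\dots]]]$, and $e_{ii}=e_i$. Lexicographic order on pairs: $(i,j)>(k,l)$ iff $i>k$, or $i=k$ and $j>l$. *)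

From mathcomp Require Import all_boot all_order all_algebra.
Set Implicit Arguments. Unset Strict Implicit. Unset Printing Implicit Defensive.
Import Order.TTheory GRing.Theory Num.Theory.
Local Open Scope ring_scope.

(* A Lie superalgebra is a k-vector space V with a Z/2-grading
   V = V_false (+) V_true (P b x : "x is homogeneous of parity b")
   and a bilinear bracket br satisfying graded super-antisymmetry and the
   super Jacobi identity. *)

Definition ssign (k : fieldType) (a b : bool) : k := if a && b then -1 else 1.

Definition is_lie_superalgebra (k : fieldType) (V : lmodType k)
    (br : V -> V -> V) (P : bool -> V -> Prop) : Prop :=
  [/\
      ((forall (c : k) (x y z : V), br (c *: x + y) z = c *: br x z + br y z)
       /\ (forall (c : k) (x y z : V), br z (c *: x + y) = c *: br z x + br z y)),
      (forall b, P b 0 /\ (forall (c : k) (x y : V), P b x -> P b y -> P b (c *: x + y))),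
      ((forall x, exists x0 x1, [/\ P false x0, P true x1 & x = x0 + x1])
        /\ (forall x, P false x -> P true x -> x = 0)),
      (forall a b x y, P a x -> P b y -> P (addb a b) (br x y)) &
      ((forall a b x y, P a x -> P b y -> br x y = - (ssign k a b *: br y x))
      /\ (forall a b x y z, P a x -> P b y ->
            br x (br y z) = br (br x y) z + ssign k a b *: br y (br x z)))].

Definition inOmega (m n i : nat) : bool := (1 <= i <= m + n)%N.

Definition tau (n i : nat) : bool := i == n.

Definition cartan (m n i j : nat) : int :=
  if i == j then (if i == n then 0 else 2)
  else if (i == n) && (j == n.+1) then 1
  else if (i == m + n) && (j == (m + n).-1) then -2
  else if (i == j.+1) || (j == i.+1) then -1
  else 0.

Definition nij (m n i j : nat) : int :=
  if (cartan m n i i == 0) && (cartan m n i j != 0) then -1 else cartan m n i j.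

Definition in_eta (m n kk : nat) : bool :=
  [&& tau n kk, ~~ tau n kk.+1, ~~ tau n kk.-1,
      inOmega m n kk.+1, (1 <= kk)%N && inOmega m n kk.-1,
      cartan m n kk kk == 0, cartan m n kk.+1 kk.-1 == 0 &
      cartan m n kk kk.+1 + cartan m n kk kk.-1 == 0].

Definition adl (V : Type) (br : V -> V -> V) (N : nat) (x y : V) : V :=
  iter N (br x) y.
Definition adr (V : Type) (br : V -> V -> V) (N : nat) (x y : V) : V :=
  iter N (fun z => br z y) x.

Definition km_relations (k : fieldType) (V : lmodType k) (br : V -> V -> V)
    (P : bool -> V -> Prop) (m n : nat) (e h f : nat -> V) : Prop :=
  [/\
      (forall i, inOmega m n i ->
         [/\ P (i == n) (e i), P (i == n) (f i) & P false (h i)]),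
      (forall i j, inOmega m n i -> inOmega m n j ->
         br (h i) (h j) = 0 /\ br (e i) (f j) = (if i == j then h i else 0)),
      (forall i j, inOmega m n i -> inOmega m n j ->
         br (e j) (h i) = - ((cartan m n i j)%:~R *: e j)
         /\ br (h i) (f j) = - ((cartan m n i j)%:~R *: f j)),
      (forall i j, inOmega m n i -> inOmega m n j -> (j < i)%N ->
         [/\ adl br `|1 - nij m n i j|%N (e i) (e j) = 0,
             adr br `|1 - nij m n j i|%N (e i) (e j) = 0,
             adl br `|1 - nij m n i j|%N (f i) (f j) = 0 &
             adr br `|1 - nij m n j i|%N (f i) (f j) = 0]) &
      (forall kk, inOmega m n kk -> in_eta m n kk ->
         br (br (e kk.+1) (e kk)) (br (e kk) (e kk.-1)) = 0
         /\ br (br (f kk.+1) (f kk)) (br (f kk) (f kk.-1)) = 0)].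

(* e_{ij} = [e_i,[e_{i-1},[...,[e_{j+1},e_j]...]]] for i >= j; e_{ii} = e_i.
   eseg br e j d = e_{j+d, j}. *)
Fixpoint eseg (V : Type) (br : V -> V -> V) (e : nat -> V) (j d : nat) : V :=
  match d with
  | 0 => e j
  | d'.+1 => br (e (j + d'.+1)%N) (eseg br e j d')
  end.

Definition eij (V : Type) (br : V -> V -> V) (e : nat -> V) (i j : nat) : V :=
  eseg br e j (i - j).

Definition lex_ge (i j k l : nat) : bool := (k < i)%N || ((i == k) && (l <= j)%N).

From mathcomp Require Import all_boot all_order all_algebra zify.
Import Order.TTheory GRing.Theory Num.Theory.
Local Open Scope ring_scope.
Set Implicit Arguments. Unset Strict Implicit. Unset Printing Implicit Defensive.

(* Write N = m + n.  For (1), a segment e_(i,j) is built one simple root vector at a time,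
   so everything reduces to how a single e_a acts on a segment: it commutes with e_(i,j)
   when a is far from [j, i], and also when j <= a <= i and a < N.  The latter comes from
   the Serre relations, from [e_n, e_n] = 0 (a Serre relation bracketed with f_(n+1)) and,
   at the odd root, from the relation attached to eta.
   For (2), put x_i = e_(N,i).  For a < N, bracketing on the right with e_a is a
   superderivation sending x_(a+1) to x_a and killing every other x_i, so [x_i,[x_j,x_k]]
   vanishes as soon as it vanishes with one index raised, unless each index below N is
   followed by its successor among the other two.  This leaves triples from {N-2, N-1, N},
   which reduce to the Serre relation (ad e_N)^3 e_(N-1) = 0 through super-antisymmetry, the
   Jacobi identity, and the fact that v = ±v ± v forces v = 0 when char k <> 2, 3.
   (3) follows from (2) by the Jacobi identity. *)

Ltac cartan_cases := rewrite /nij /cartan; repeat case: ifP; lia.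

Lemma nij_far m n i j : (j.+1 < i)%N -> nij m n i j = 0.
Proof. cartan_cases. Qed.

Lemma nij_pred_succ m n t : (2 <= t <= m + n)%N -> nij m n t.-1 t = -1.
Proof. cartan_cases. Qed.

Lemma nij_succ_pred m n t : (0 < m)%N -> (2 <= t <= m + n)%N -> t != n ->
  nij m n t t.-1 = if t == (m + n)%N then -2 else -1.
Proof. cartan_cases. Qed.

Lemma cartan_succ_n m n : (0 < m)%N -> cartan m n n.+1 n = -1 \/ cartan m n n.+1 n = -2.
Proof. rewrite /cartan; repeat case: ifP; lia. Qed.

Lemma in_eta_n m n : (0 < m)%N -> (2 <= n)%N -> in_eta m n n.
Proof.
move=> m_gt0 n_ge2; rewrite /in_eta /tau /inOmega.
have -> : cartan m n n n = 0 by cartan_cases.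
have -> : cartan m n n.+1 n.-1 = 0 by cartan_cases.
have -> : cartan m n n n.+1 = 1 by cartan_cases.
have -> : cartan m n n n.-1 = -1 by cartan_cases.
lia.
Qed.

Section Superalgebra.

Variables (k : fieldType) (V : lmodType k) (br : V -> V -> V) (P : bool -> V -> Prop).
Hypothesis super : is_lie_superalgebra br P.

Lemma brZDl c x y z : br (c *: x + y) z = c *: br x z + br y z.
Proof. by case: super => -[]. Qed.

Lemma brZDr c x y z : br z (c *: x + y) = c *: br z x + br z y.
Proof. by case: super => -[]. Qed.

Lemma br0l z : br 0 z = 0.
Proof. by have := brZDl (-1) 0 0 z; rewrite scaler0 add0r scaleN1r addNr. Qed.

Lemma br0r z : br z 0 = 0.
Proof. by have := brZDr (-1) 0 0 z; rewrite scaler0 add0r scaleN1r addNr. Qed.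

Lemma brZl c x z : br (c *: x) z = c *: br x z.
Proof. by have := brZDl c x 0 z; rewrite !addr0 br0l addr0. Qed.

Lemma brZr c x z : br z (c *: x) = c *: br z x.
Proof. by have := brZDr c x 0 z; rewrite !addr0 br0r addr0. Qed.

Lemma brDr x y z : br z (x + y) = br z x + br z y.
Proof. by have := brZDr 1 x y z; rewrite !scale1r. Qed.

Lemma brNl x z : br (- x) z = - br x z.
Proof. by rewrite -scaleN1r brZl scaleN1r. Qed.

Lemma brNr x z : br z (- x) = - br z x.
Proof. by rewrite -scaleN1r brZr scaleN1r. Qed.

Lemma ssignE a b : ssign k a b = (-1) ^+ (a && b).
Proof. by rewrite /ssign; case: (a && b). Qed.

Lemma P_br a b x y : P a x -> P b y -> P (a (+) b) (br x y).
Proof. by case: super => _ _ _ + _; apply. Qed.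

Lemma br_anti a b x y : P a x -> P b y -> br x y = - ((-1) ^+ (a && b) *: br y x).
Proof. by case: super => _ _ _ _ [anti _] Px Py; rewrite (anti _ _ _ _ Px Py) ssignE. Qed.

Lemma br_jacobi a b x y z : P a x -> P b y ->
  br x (br y z) = br (br x y) z + (-1) ^+ (a && b) *: br y (br x z).
Proof. by case: super => _ _ _ _ [_ jacobi] Px Py; rewrite (jacobi _ _ _ _ z Px Py) ssignE. Qed.

Definition homog x := exists b, P b x.

Lemma homog_br x y : homog x -> homog y -> homog (br x y).
Proof. by move=> [a Px] [b Py]; exists (a (+) b); apply: P_br. Qed.

Definition eq_pm (u v : V) := exists s : bool, u = (-1) ^+ s *: v.

Lemma eq_pm_refl u : eq_pm u u.
Proof. by exists false; rewrite scale1r. Qed.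

Lemma eq_pm_trans u v w : eq_pm u v -> eq_pm v w -> eq_pm u w.
Proof. by move=> [s ->] [t ->]; exists (s (+) t); rewrite scalerA signr_addb. Qed.

Lemma eq_pmZ (s : bool) u v : eq_pm u v -> eq_pm ((-1) ^+ s *: u) v.
Proof. by move=> uv; apply: (eq_pm_trans _ uv); exists s. Qed.

Lemma eq_pm0 u v : eq_pm u v -> v = 0 -> u = 0.
Proof. by move=> [s ->] ->; rewrite scaler0. Qed.

Lemma eq_pm_of_signed_add0 (s t : bool) u v : (-1) ^+ s *: u + (-1) ^+ t *: v = 0 -> eq_pm u v.
Proof.
move/eqP; rewrite addr_eq0 => /eqP /(congr1 ( *:%R ((-1) ^+ s))); rewrite signrZK => ->.
by exists (~~ (s (+) t)); rewrite signrN scaleNr scalerN scalerA signr_addb.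
Qed.

Lemma eq_pm_of_add0 (s : bool) u v : u + (-1) ^+ s *: v = 0 -> eq_pm u v.
Proof. by move=> uv0; apply: (@eq_pm_of_signed_add0 false s); rewrite scale1r. Qed.

Lemma br_eq_pm x y : homog x -> homog y -> eq_pm (br x y) (br y x).
Proof. by move=> [a Px] [b Py]; exists (~~ (a && b)); rewrite (br_anti Px Py) signrN scaleNr. Qed.

Lemma br_anti0 x y : homog x -> homog y -> br y x = 0 -> br x y = 0.
Proof. by move=> hx hy; apply: eq_pm0; apply: br_eq_pm. Qed.

Lemma br_swap_r0 x y z : homog y -> homog z -> br x (br y z) = 0 -> br x (br z y) = 0.
Proof. by move=> hy hz; have [s ->] := br_eq_pm hz hy; rewrite brZr => ->; rewrite scaler0. Qed.

Lemma br_jacobi_pm x y z : homog x -> homog y ->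
  exists s : bool, br x (br y z) = br (br x y) z + (-1) ^+ s *: br y (br x z).
Proof. by move=> [a Px] [b Py]; exists (a && b); apply: br_jacobi. Qed.

Lemma br_supercomm x y z : homog x -> homog y -> br x y = 0 ->
  eq_pm (br x (br y z)) (br y (br x z)).
Proof.
by move=> hx hy xy; have [s ->] := br_jacobi_pm z hx hy; rewrite xy br0l add0r; exists s.
Qed.

Lemma jacobi_of_comm x y z : homog x -> homog y -> br x z = 0 ->
  br x (br y z) = br (br x y) z.
Proof. by move=> [a Px] [b Py] xz; rewrite (br_jacobi _ Px Py) xz br0r scaler0 addr0. Qed.

Lemma br_cent_l x y z : homog x -> homog y -> br x z = 0 -> br y z = 0 ->
  br (br x y) z = 0.
Proof. by move=> hx hy xz yz; rewrite -jacobi_of_comm // yz br0r. Qed.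

Lemma br_cent_r x y z : homog z -> homog x -> br z x = 0 -> br z y = 0 ->
  br z (br x y) = 0.
Proof. by move=> hz hx zx zy; rewrite jacobi_of_comm // zx br0l. Qed.

Lemma br_derivation x y z : homog x -> homog y -> homog z ->
  exists s : bool, br (br x y) z = br x (br y z) + (-1) ^+ s *: br (br x z) y.
Proof.
move=> [a Px] [b Py] [c Pz].
have := br_jacobi z Px Py; rewrite (br_anti Py (P_br Px Pz)) scalerN scalerA -signr_addb.
by move=> ->; exists ((a && b) (+) (b && (a (+) c))); rewrite subrK.
Qed.

Lemma derivation_of_comm x y z : homog x -> homog y -> homog z -> br x z = 0 ->
  br (br x y) z = br x (br y z).
Proof.
by move=> hx hy hz xz; have [s ->] := br_derivation hx hy hz; rewrite xz br0l scaler0 addr0.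
Qed.

Lemma br_derivation3 x y z w : homog x -> homog y -> homog z -> homog w ->
  exists s t : bool, br (br x (br y z)) w =
    br x (br y (br z w)) + (-1) ^+ s *: br x (br (br y w) z) + (-1) ^+ t *: br (br x w) (br y z).
Proof.
move=> hx hy hz hw; have [t ->] := br_derivation hx (homog_br hy hz) hw.
by have [s ->] := br_derivation hy hz hw; exists s, t; rewrite brDr brZr.
Qed.

Hypothesis two_neq0 : (2%:R : k) != 0.

Lemma eq_opp_eq0 (v : V) : v = - v -> v = 0.
Proof.
move=> vN; have : (2%:R : k) *: v == 0 by rewrite scaler_nat mulr2n {2}vN subrr.
by rewrite scaler_eq0 (negPf two_neq0) => /eqP.
Qed.

Lemma br_even_self x : P false x -> br x x = 0.
Proof. by move=> Px; apply: eq_opp_eq0; rewrite {1}(br_anti Px Px) scale1r. Qed.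

Lemma br_odd_sq x z : P true x -> br x x = 0 -> br x (br x z) = 0.
Proof.
by move=> Px xx; apply: eq_opp_eq0; rewrite {1}(br_jacobi z Px Px) xx br0l add0r scaleN1r.
Qed.

Hypothesis three_neq0 : (3%:R : k) != 0.

Lemma sign3_neq0 (a b c : bool) : (-1) ^+ a + (-1) ^+ b + (-1) ^+ c != 0 :> k.
Proof.
have three : (1 + 1 + 1 : k) != 0 by move: three_neq0; rewrite !mulrSr mulr0n add0r.
case: a b c => [] [] [] /=;
  rewrite ?expr1 ?expr0 ?addrNK ?addrK ?addNr ?subrr ?add0r ?oppr_eq0 ?oner_eq0 //.
by rewrite -!opprD oppr_eq0.
Qed.

Lemma eq_pm3_eq0 (u v w x : V) : u = v + w -> eq_pm u x -> eq_pm v x -> eq_pm w x -> x = 0.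
Proof.
move=> uvw [a ux] [b vx] [c wx].
have : ((-1) ^+ a + (-1) ^+ (~~ b) + (-1) ^+ (~~ c)) *: x == 0.
  by rewrite !signrN !scalerDl !scaleNr -ux -vx -wx uvw addrAC addrK subrr.
by rewrite scaler_eq0 (negPf (sign3_neq0 _ _ _)) => /eqP.
Qed.

Section KacMoody.

Variables (m n : nat) (e h f : nat -> V).
Hypotheses (m_gt0 : (0 < m)%N) (n_gt0 : (0 < n)%N).
Hypothesis rels : km_relations br P m n e h f.

Local Notation N := (m + n)%N.
Local Notation E := (eij br e).

Lemma P_e i : (0 < i <= N)%N -> P (i == n) (e i).
Proof. by case: rels => + _ _ _ _ => /[apply] -[]. Qed.

Lemma P_e_even i : (0 < i <= N)%N -> i != n -> P false (e i).
Proof. by move=> /P_e + /negPf i_neq_n; rewrite i_neq_n. Qed.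

Lemma homog_e i : (0 < i <= N)%N -> homog (e i).
Proof. by move/P_e; exists (i == n). Qed.

Lemma serre_e i j : (0 < j)%N -> (j < i <= N)%N ->
  adl br `|1 - nij m n i j| (e i) (e j) = 0 /\ adr br `|1 - nij m n j i| (e i) (e j) = 0.
Proof.
move=> j_gt0 /andP [lt_ji le_iN]; case: rels => _ _ _ serre _.
by have [|||-> -> _ _] := serre i j; rewrite /inOmega; try lia.
Qed.

Lemma br_e_far a b : (0 < a <= N)%N -> (0 < b <= N)%N -> (b.+1 < a)%N || (a.+1 < b)%N ->
  br (e a) (e b) = 0.
Proof.
move=> a_in b_in /orP [ba|ab].
  by have [||+ _] := @serre_e a b; rewrite ?nij_far //; lia.
apply: br_anti0 (homog_e _) (homog_e _) _ => //.
by have [||+ _] := @serre_e b a; rewrite ?nij_far //; lia.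
Qed.

Lemma serre_adr2 t : (1 < t <= N)%N -> br (br (e t) (e t.-1)) (e t.-1) = 0.
Proof. by move=> t_in; have [||_] := @serre_e t t.-1; rewrite ?nij_pred_succ //; lia. Qed.

Lemma serre_adl2 t : (1 < t < N)%N -> t != n -> br (e t) (br (e t) (e t.-1)) = 0.
Proof.
move=> t_in t_neq_n; have [||+ _] := @serre_e t t.-1; try lia.
by rewrite nij_succ_pred ?ifN //; lia.
Qed.

Lemma serre_adl3 : br (e N) (br (e N) (br (e N) (e N.-1))) = 0.
Proof.
have [||+ _] := @serre_e N N.-1; try lia.
by rewrite nij_succ_pred ?eqxx //; lia.
Qed.

Lemma eta_relation : (1 < n)%N -> br (br (e n.+1) (e n)) (br (e n) (e n.-1)) = 0.
Proof.
move=> n_gt1; case: rels => _ _ _ _ /(_ n) eta.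
by have [||-> _] := eta; rewrite /inOmega ?in_eta_n //; lia.
Qed.

(* Bracketing the Serre relation [[e_(n+1), e_n], e_n] = 0 with f_(n+1) gives
   -a_(n+1,n) [e_n, e_n] = 0. *)
Lemma br_e_n_self : br (e n) (e n) = 0.
Proof.
have n_in : (0 < n <= N)%N by lia.
have n1_in : (0 < n.+1 <= N)%N by lia.
case: rels => par ef eh _ _.
have [Pe1 Pf1 _] := par n.+1 n1_in; rewrite [n.+1 == n](_ : _ = false) in Pe1 Pf1; last lia.
have [_ _ Ph1] := par n.+1 n1_in.
have Pn := P_e n_in; rewrite eqxx in Pn.
have fe1 : br (f n.+1) (e n.+1) = - h n.+1.
  by rewrite (br_anti Pf1 Pe1) (ef _ _ n1_in n1_in).2 eqxx scale1r.
have fe0 : br (f n.+1) (e n) = 0.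
  apply: br_anti0 (ex_intro _ _ Pf1) (ex_intro _ _ Pn) _.
  by rewrite (ef _ _ n_in n1_in).2 ifN //; lia.
have he : br (h n.+1) (e n) = (cartan m n n.+1 n)%:~R *: e n.
  by rewrite (br_anti Ph1 Pn) (eh _ _ n1_in n_in).1 expr0 scale1r opprK.
have fee : br (f n.+1) (br (e n.+1) (e n)) = - ((cartan m n n.+1 n)%:~R *: e n).
  by rewrite (br_jacobi _ Pf1 Pe1) fe0 br0r scaler0 addr0 fe1 brNl he.
have c_neq0 : (cartan m n n.+1 n)%:~R != 0 :> k.
  by case: (cartan_succ_n n m_gt0) => ->; rewrite intrN oppr_eq0 // oner_eq0.
have n1_gt1 : (1 < n.+1 <= N)%N by lia.
have := congr1 (br (f n.+1)) (serre_adr2 n1_gt1).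
rewrite br0r (br_jacobi _ Pf1 (P_br Pe1 Pn)) fee fe0 br0r scaler0 addr0 brNl brZl.
by move/eqP; rewrite oppr_eq0 scaler_eq0 (negPf c_neq0) => /eqP.
Qed.

Lemma eii i : E i i = e i.
Proof. by rewrite /eij subnn. Qed.

Lemma eijS i j : (j < i)%N -> E i j = br (e i) (E i.-1 j).
Proof.
move=> lt_ji; rewrite /eij (_ : i - j = (i.-1 - j).+1)%N /=; last lia.
by rewrite (_ : j + (i.-1 - j).+1 = i)%N; last lia.
Qed.

Lemma P_eij i j : (0 < j <= i)%N -> (i <= N)%N -> P ((j <= n) && (n <= i))%N (E i j).
Proof.
elim: i => [|i IH] j_in iN; first lia.
have [->|ji] := eqVneq j i.+1.
  by rewrite eii (_ : _ && _ = (i.+1 == n)); [apply: P_e | ]; lia.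
rewrite eijS; last lia.
rewrite (_ : _ && _ = (i.+1 == n) (+) ((j <= n) && (n <= i)))%N; last lia.
by apply: P_br; [apply: P_e | apply: IH]; lia.
Qed.

Lemma homog_eij i j : (0 < j <= i)%N -> (i <= N)%N -> homog (E i j).
Proof. by move=> j_in iN; eexists; apply: P_eij. Qed.

Lemma eij_cent_r z i j : homog z -> (0 < j <= i)%N -> (i <= N)%N ->
  (forall a, (j <= a <= i)%N -> br z (e a) = 0) -> br z (E i j) = 0.
Proof.
move=> hz; elim: i => [|i IH] j_in iN za; first lia.
have [ji|ji] := eqVneq j i.+1; first by rewrite -ji eii za //; lia.
rewrite eijS; last lia.
apply: br_cent_r hz (homog_e _) (za _ _) (IH _ _ _); try lia.
by move=> a a_in; apply: za; lia.
Qed.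

Lemma eij_cent_l z i j : (0 < j <= i)%N -> (i <= N)%N ->
  (forall a, (j <= a <= i)%N -> br (e a) z = 0) -> br (E i j) z = 0.
Proof.
elim: i => [|i IH] j_in iN az; first lia.
have [ji|ji] := eqVneq j i.+1; first by rewrite -ji eii az //; lia.
rewrite eijS; last lia.
apply: br_cent_l (homog_e _) (homog_eij _ _) (az _ _) (IH _ _ _); try lia.
by move=> a a_in; apply: az; lia.
Qed.

Lemma br_e_eij_far a i j : (0 < a <= N)%N -> (0 < j <= i)%N -> (i <= N)%N ->
  (i.+1 < a)%N || (a.+1 < j)%N -> br (e a) (E i j) = 0.
Proof.
move=> a_in j_in iN far; apply: eij_cent_r (homog_e _) _ _ _ => // b b_in.
by apply: br_e_far; lia.
Qed.

Lemma br_eij_e_far a i j : (0 < a <= N)%N -> (0 < j <= i)%N -> (i <= N)%N ->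
  (i.+1 < a)%N || (a.+1 < j)%N -> br (E i j) (e a) = 0.
Proof. by move=> *; apply: br_anti0 (homog_eij _ _) (homog_e _) (br_e_eij_far _ _ _ _). Qed.

Lemma br_eij_far i j kk l : (0 < l <= kk)%N -> (kk.+1 < j <= i)%N -> (i <= N)%N ->
  br (E i j) (E kk l) = 0.
Proof.
move=> l_in j_in iN; apply: eij_cent_l => [||a a_in]; try lia.
by apply: br_e_eij_far; lia.
Qed.

Lemma br_eij_adj i j l : (0 < l < j)%N -> (j <= i <= N)%N -> br (E i j) (E j.-1 l) = E i l.
Proof.
move=> l_in; elim: i => [|i IH] i_in; first lia.
have [ji|ji] := eqVneq j i.+1.
  by rewrite ji eii [in RHS]eijS //; lia.
rewrite eijS; last lia.
have e_far : br (e i.+1) (E j.-1 l) = 0 by apply: br_e_eij_far; lia.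
rewrite (derivation_of_comm (homog_e _) (homog_eij _ _) (homog_eij _ _) e_far) /= ?IH; try lia.
by rewrite [E i.+1 l]eijS; last lia.
Qed.

Lemma br_e_eij_head t j : (0 < j <= t)%N -> (t < N)%N -> br (e t) (E t j) = 0.
Proof.
move=> j_in tN; have t_in : (0 < t <= N)%N by lia.
have [tn|tn] := eqVneq t n.
  subst t; have Pn : P true (e n) by rewrite -[true](eqxx n); apply: P_e.
  have [->|jn] := eqVneq j n; first by rewrite eii br_e_n_self.
  by rewrite eijS; [apply: br_odd_sq; rewrite ?br_e_n_self | lia].
have [->|jt] := eqVneq j t; first by rewrite eii br_even_self //; apply: P_e_even.
rewrite eijS; last lia.
have [->|jt1] := eqVneq j t.-1; first by rewrite eii serre_adl2 //; lia.
have tY : br (e t) (E t.-2 j) = 0 by apply: br_e_eij_far; lia.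
rewrite eijS; last lia.
rewrite (jacobi_of_comm (homog_e _) (homog_e _) tY); try lia.
by apply: br_cent_r (homog_e _) (homog_br (homog_e _) (homog_e _)) (serre_adl2 _ _) tY; lia.
Qed.

Lemma br_eij_odd_e : (1 < n)%N -> br (E n.+1 n.-1) (e n) = 0.
Proof.
move=> n_gt1; have n_in : (0 < n <= N)%N by lia.
have Pn : P true (e n) by rewrite -[true](eqxx n); apply: P_e.
have hb : homog (br (e n) (e n.-1)) by apply: homog_br; apply: homog_e; lia.
rewrite eijS /=; last lia.
rewrite eijS ?eii; last lia.
have hn1 : homog (e n.+1) by apply: homog_e; lia.
have [s ->] := br_derivation hn1 hb (homog_e n_in).
rewrite eta_relation // scaler0 addr0 (br_anti0 hb (homog_e n_in)) ?br0r //.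
by apply: br_odd_sq; rewrite ?br_e_n_self.
Qed.

Lemma br_eij_e_pred s j : (0 < j <= s)%N -> (s < N)%N -> br (E s.+1 j) (e s) = 0.
Proof.
move=> j_in sN; have s_in : (0 < s <= N)%N by lia.
have [->|js] := eqVneq j s; first by rewrite eijS /= ?eii ?serre_adr2 //; lia.
have [sn|sn] := eqVneq s n.
  subst s; have [->|jn1] := eqVneq j n.-1; first by apply: br_eij_odd_e; lia.
  rewrite -(@br_eij_adj n.+1 n.-1 j); try lia.
  apply: br_cent_l (homog_eij _ _) (homog_eij _ _) (br_eij_odd_e _) _; try lia.
  by apply: br_eij_e_far; lia.
(* With u = [e_(s+1), e_s] and v = [e_(s+1,j), e_s], the Serre relation [u, e_s] = 0 gives
   v = -[u, e_(s,j)] while [e_s, e_(s,j)] = 0 gives [u, e_(s,j)] = v. *)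
have Ps := P_e_even s_in sn.
have hs1 : homog (e s.+1) by apply: homog_e; lia.
have hu : homog (br (e s.+1) (e s)) := homog_br hs1 (homog_e s_in).
have [b PY] : homog (E s.-1 j) by apply: homog_eij; lia.
have Es : E s j = br (e s) (E s.-1 j) by rewrite eijS //; lia.
have s1Y : br (e s.+1) (E s.-1 j) = 0 by apply: br_e_eij_far; lia.
have Es1 : E s.+1 j = br (br (e s.+1) (e s)) (E s.-1 j).
  by rewrite -(jacobi_of_comm hs1 (homog_e s_in) s1Y) -Es eijS //; lia.
have u_es : br (br (e s.+1) (e s)) (E s j) = br (E s.+1 j) (e s).
  have Ps1 : P (s.+1 == n) (e s.+1) by apply: P_e; lia.
  have sE : br (e s) (E s j) = 0 by apply: br_e_eij_head; lia.
  have s1E : br (e s.+1) (E s j) = E s.+1 j by rewrite [RHS]eijS //; lia.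
  have [c PE] : homog (E s.+1 j) by apply: homog_eij; lia.
  have := br_jacobi (E s j) Ps1 Ps; rewrite sE br0r andbF expr0 scale1r s1E.
  move=> /esym /eqP; rewrite addr_eq0 => /eqP ->.
  by rewrite (br_anti Ps PE) andFb expr0 scale1r opprK.
apply: eq_opp_eq0; rewrite {1}Es1 (derivation_of_comm hu (ex_intro _ _ PY) (homog_e s_in)).
  by rewrite (br_anti PY Ps) andbF expr0 scale1r -Es brNr u_es.
by apply: serre_adr2; lia.
Qed.

Lemma br_eij_e_inner t j a : (0 < j <= a)%N -> (a < t <= N)%N -> br (E t j) (e a) = 0.
Proof.
elim: t => [|t IH] j_in t_in; first lia.
have [at_|lt_at] := eqVneq a t; first by rewrite at_ br_eij_e_pred //; lia.
rewrite eijS; last lia.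
apply: br_cent_l (homog_e _) (homog_eij _ _) _ (IH _ _); try lia.
by apply: br_e_far; lia.
Qed.

Lemma br_eij_e_mid i j a : (0 < j <= a)%N -> (a <= i <= N)%N -> (a < N)%N ->
  br (E i j) (e a) = 0.
Proof.
move=> j_in a_in aN; have [lt_ai|] := ltnP a i; first by apply: br_eij_e_inner; lia.
move=> le_ia; have -> : i = a by lia.
by apply: br_anti0 (homog_eij _ _) (homog_e _) (br_e_eij_head _ _); lia.
Qed.

Lemma br_e_eij_mid i j a : (0 < j <= a)%N -> (a <= i <= N)%N -> (a < N)%N ->
  br (e a) (E i j) = 0.
Proof. by move=> *; apply: br_anti0 (homog_e _) (homog_eij _ _) (br_eij_e_mid _ _ _); lia. Qed.

Lemma br_eij_nested i j kk l : (0 < j <= kk)%N -> (kk <= i <= N)%N -> (0 < l <= kk)%N ->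
  (kk < N)%N -> br (E i j) (E kk l) = 0.
Proof.
elim: kk => [|kk IH] j_in kk_in l_in kkN; first lia.
have [->|lk] := eqVneq l kk.+1; first by rewrite eii br_eij_e_mid //; lia.
rewrite [E kk.+1 l]eijS; last lia.
have hX : homog (E i j) by apply: homog_eij; lia.
have hk : homog (e kk.+1) by apply: homog_e; lia.
apply: eq_pm0 (br_supercomm _ hX hk (br_eij_e_mid _ _ _)) _; try lia.
have [jk|jk] := eqVneq j kk.+1.
  by rewrite jk br_eij_adj ?br_e_eij_mid //; lia.
by rewrite IH ?br0r //; lia.
Qed.

Lemma br_eij i j kk l : (0 < j <= i)%N -> (0 < l <= kk)%N -> (kk <= i <= N)%N -> (kk < N)%N ->
  br (E i j) (E kk l) = if j.-1 == kk then E i l else 0.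
Proof.
move=> j_in l_in kk_in kkN; have [jk|jk] := eqVneq j.-1 kk.
  by rewrite -jk br_eij_adj //; lia.
have [far|] := ltnP kk.+1 j; first by apply: br_eij_far; lia.
by move=> le_jk; apply: br_eij_nested; lia.
Qed.

Local Notation x i := (E N i).
Local Notation T i j kk := (br (x i) (br (x j) (x kk))).

Lemma homog_x i : (0 < i <= N)%N -> homog (x i).
Proof. by move=> i_in; apply: homog_eij; lia. Qed.

Lemma br_x_e_succ a : (0 < a < N)%N -> br (x a.+1) (e a) = x a.
Proof. by move=> a_in; rewrite -[e a]eii br_eij_adj //; lia. Qed.

Lemma br_x_e a i : (0 < a < N)%N -> (0 < i <= N)%N -> i != a.+1 -> br (x i) (e a) = 0.
Proof.
move=> a_in i_in ia; have [far|] := ltnP a.+1 i.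
  by rewrite -[e a]eii br_eij_far //; lia.
by move=> le_ia; apply: br_eij_e_inner; lia.
Qed.

Lemma triple_lower_first i j kk : (0 < i < N)%N -> (0 < j <= N)%N -> (0 < kk <= N)%N ->
  j != i.+1 -> kk != i.+1 -> T i.+1 j kk = 0 -> T i j kk = 0.
Proof.
move=> i_in j_in kk_in ji kki T0.
have hi1 : homog (x i.+1) by apply: homog_x; lia.
have hei : homog (e i) by apply: homog_e; lia.
have [s [t]] := br_derivation3 hi1 (homog_x j_in) (homog_x kk_in) hei.
rewrite T0 br0l (br_x_e _ kk_in) // (br_x_e _ j_in) // br_x_e_succ //.
rewrite ?(br0l, br0r, scaler0, add0r) => /esym /eqP.
by rewrite scaler_eq0 signr_eq0 => /eqP.
Qed.

Lemma triple_lower_last i j kk : (0 < kk < N)%N -> (0 < i <= N)%N -> (0 < j <= N)%N ->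
  i != kk.+1 -> j != kk.+1 -> T i j kk.+1 = 0 -> T i j kk = 0.
Proof.
move=> kk_in i_in j_in ik jk T0.
have hk1 : homog (x kk.+1) by apply: homog_x; lia.
have hek : homog (e kk) by apply: homog_e; lia.
have [s [t]] := br_derivation3 (homog_x i_in) (homog_x j_in) hk1 hek.
rewrite T0 br0l (br_x_e _ i_in) // (br_x_e _ j_in) // br_x_e_succ //.
by rewrite ?(br0l, br0r, scaler0, addr0).
Qed.

Lemma triple_lower_mid i j kk : (0 < j < N)%N -> (0 < i <= N)%N -> (0 < kk <= N)%N ->
  i != j.+1 -> kk != j.+1 -> T i j.+1 kk = 0 -> T i j kk = 0.
Proof.
move=> j_in i_in kk_in ij kj T0; apply: br_swap_r0 (homog_x _) (homog_x _) _; try lia.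
apply: triple_lower_last => //; apply: br_swap_r0 (homog_x _) (homog_x _) _ => //; lia.
Qed.

Lemma triple_swap i j kk : (0 < j <= N)%N -> (0 < kk <= N)%N -> T i j kk = 0 -> T i kk j = 0.
Proof. by move=> j_in kk_in; apply: br_swap_r0; apply: homog_x. Qed.

Section Top.

Variable p : nat.
Hypothesis top : p.+2 = N.

Let hr : homog (x p.+2). Proof. by apply: homog_x; lia. Qed.
Let hq : homog (x p.+1). Proof. by apply: homog_x; lia. Qed.
Let heq : homog (e p.+1). Proof. by apply: homog_e; lia. Qed.

Lemma x_top : x p.+2 = e N.
Proof. by rewrite top eii. Qed.

Lemma x_top_pred : x p.+1 = br (e N) (e N.-1).
Proof. by rewrite eijS; last lia; rewrite (_ : N.-1 = p.+1) ?eii //; lia. Qed.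

Lemma triple_any_top_top i : T i p.+2 p.+2 = 0.
Proof. by rewrite x_top br_even_self ?br0r //; apply: P_e_even; lia. Qed.

Lemma triple_top_top_pred : T p.+2 p.+2 p.+1 = 0.
Proof. by rewrite x_top x_top_pred serre_adl3. Qed.

Lemma triple_top_pred_top : T p.+2 p.+1 p.+2 = 0.
Proof. by apply: triple_swap triple_top_top_pred; lia. Qed.

Lemma triple_pred_pred_top : T p.+1 p.+1 p.+2 = 0 /\ T p.+2 p.+1 p.+1 = 0.
Proof.
have rqq_qqr : eq_pm (T p.+2 p.+1 p.+1) (T p.+1 p.+1 p.+2).
  have xq_eq : br (x p.+1) (e p.+1) = 0 by apply: br_x_e; lia.
  have [s [t]] := br_derivation3 hr hq hr heq.
  rewrite triple_top_pred_top br0l xq_eq br_x_e_succ; last lia.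
  by rewrite br0l br0r scaler0 addr0 => /esym /eq_pm_of_add0.
have [s J] := br_jacobi_pm (x p.+2) hq hq.
have qqr0 : T p.+1 p.+1 p.+2 = 0.
  apply: eq_pm3_eq0 J (eq_pm_refl _) _ (eq_pmZ _ (eq_pm_refl _)).
  exact: eq_pm_trans (br_eq_pm (homog_br hq hq) hr) rqq_qqr.
by split; last apply: eq_pm0 rqq_qqr qqr0.
Qed.

Lemma triple_bottom : (0 < p)%N ->
  [/\ T p p.+1 p.+2 = 0, T p.+1 p p.+2 = 0 & T p.+2 p p.+1 = 0].
Proof.
move=> p_gt0.
have hp : homog (x p) by apply: homog_x; lia.
have hep : homog (e p) by apply: homog_e; lia.
have qpr_pqr : eq_pm (T p.+1 p p.+2) (T p p.+1 p.+2).
  have xr_ep : br (x p.+2) (e p) = 0 by apply: br_x_e; lia.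
  have [s [t]] := br_derivation3 hq hq hr hep.
  rewrite triple_pred_pred_top.1 br0l xr_ep br_x_e_succ; last lia.
  by rewrite !br0r add0r => /esym /eq_pm_of_signed_add0.
have rpq_qpr : eq_pm (T p.+2 p p.+1) (T p.+1 p p.+2).
  have rpr0 : T p.+2 p p.+2 = 0 by apply: triple_lower_mid triple_top_pred_top; lia.
  have xp_eq : br (x p) (e p.+1) = 0 by apply: br_x_e; lia.
  have [s [t]] := br_derivation3 hr hp hr heq.
  rewrite rpr0 br0l xp_eq br_x_e_succ; last lia.
  by rewrite br0l br0r scaler0 addr0 => /esym /eq_pm_of_add0.
have [s J] := br_jacobi_pm (x p.+2) hp hq.
have pqr0 : T p p.+1 p.+2 = 0.
  apply: eq_pm3_eq0 J (eq_pm_refl _) _ (eq_pmZ _ qpr_pqr).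
  apply: eq_pm_trans (br_eq_pm (homog_br hp hq) hr) _.
  exact: eq_pm_trans rpq_qpr qpr_pqr.
have qpr0 := eq_pm0 qpr_pqr pqr0.
by split; last exact: eq_pm0 rpq_qpr qpr0.
Qed.

Lemma triple_top_block i j kk : (0 < i <= N)%N -> (0 < j <= N)%N -> (0 < kk <= N)%N ->
  ((i < N)%N -> j = i.+1 \/ kk = i.+1) -> ((j < N)%N -> i = j.+1 \/ kk = j.+1) ->
  ((kk < N)%N -> i = kk.+1 \/ j = kk.+1) -> T i j kk = 0.
Proof.
have [qqr0 rqq0] := triple_pred_pred_top.
have rrq0 := triple_top_top_pred; have rqr0 := triple_top_pred_top.
have Trr := triple_any_top_top; have Tp := triple_bottom.
move=> i_in j_in kk_in succ_i succ_j succ_kk.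
have Di : i = p \/ i = p.+1 \/ i = p.+2 by lia.
have Dj : j = p \/ j = p.+1 \/ j = p.+2 by lia.
have Dk : kk = p \/ kk = p.+1 \/ kk = p.+2 by lia.
move: i_in j_in kk_in succ_i succ_j succ_kk.
case: Di => [|[|]] ->; case: Dj => [|[|]] ->; case: Dk => [|[|]] -> *;
  try (case: Tp => [|pqr0 qpr0 rpq0]; first lia);
  solve [lia | exact: Trr | assumption | apply: triple_swap; [lia | lia | assumption]].
Qed.
End Top.

Lemma br3_eN_eq0 i j kk : (0 < i <= N)%N -> (0 < j <= N)%N -> (0 < kk <= N)%N -> T i j kk = 0.
Proof.
have [p top] : exists p, p.+2 = N by exists N.-2; lia.
suff bounded d : forall i j kk, (N - i + (N - j) + (N - kk) < d)%N ->
    (0 < i <= N)%N -> (0 < j <= N)%N -> (0 < kk <= N)%N -> T i j kk = 0.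
  exact: bounded.
elim: d => [|d IH] {}i {}j {}kk lt_d i_in j_in kk_in; first lia.
have [/and3P [iN ji kki]|low_i] := boolP [&& (i < N)%N, j != i.+1 & kk != i.+1].
  by apply: triple_lower_first (IH _ _ _ _ _ _ _) => //; lia.
have [/and3P [jN ij kkj]|low_j] := boolP [&& (j < N)%N, i != j.+1 & kk != j.+1].
  by apply: triple_lower_mid (IH _ _ _ _ _ _ _) => //; lia.
have [/and3P [kkN ikk jkk]|low_kk] := boolP [&& (kk < N)%N, i != kk.+1 & j != kk.+1].
  by apply: triple_lower_last (IH _ _ _ _ _ _ _) => //; lia.
by apply: (triple_top_block top) => //; lia.
Qed.

Lemma br22_eN_eq0 i j kk l : (0 < i <= N)%N -> (0 < j <= N)%N -> (0 < kk <= N)%N ->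
  (0 < l <= N)%N -> br (br (x i) (x j)) (br (x kk) (x l)) = 0.
Proof.
by move=> *; apply: br_cent_l (homog_x _) (homog_x _) (br3_eN_eq0 _ _ _) (br3_eN_eq0 _ _ _).
Qed.

End KacMoody.

End Superalgebra.

Theorem lemma4p3 (k : fieldType) (V : lmodType k) (br : V -> V -> V)
    (P : bool -> V -> Prop) (m n : nat) (e h f : nat -> V) :
  (2%:R : k) != 0 -> (3%:R : k) != 0 ->
  (1 <= m)%N -> (1 <= n)%N ->
  is_lie_superalgebra br P ->
  km_relations br P m n e h f ->
  [/\ (forall i j kk l, inOmega m n i -> inOmega m n j -> inOmega m n kk ->
         inOmega m n l -> (j <= i)%N -> (l <= kk)%N -> lex_ge i j kk l ->
         (kk < m + n)%N ->
         br (eij br e i j) (eij br e kk l) = (if j.-1 == kk then eij br e i l else 0)),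
      (forall i j kk, inOmega m n i -> inOmega m n j -> inOmega m n kk ->
         br (eij br e (m + n) i) (br (eij br e (m + n) j) (eij br e (m + n) kk)) = 0) &
      (forall i j kk l, inOmega m n i -> inOmega m n j -> inOmega m n kk ->
         inOmega m n l ->
         br (br (eij br e (m + n) i) (eij br e (m + n) j))
            (br (eij br e (m + n) kk) (eij br e (m + n) l)) = 0)].
Proof.
move=> two three m_gt0 n_gt0 super rels; split.
- move=> i j kk l; rewrite /inOmega /lex_ge => i_in j_in kk_in l_in ji lk lex kkN.
  by apply: (br_eij super two three m_gt0 n_gt0 rels); lia.
- by move=> i j kk; apply: (br3_eN_eq0 super two three m_gt0 n_gt0 rels).
- by move=> i j kk l; apply: (br22_eN_eq0 super two three m_gt0 n_gt0 rels).
Qed.
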